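(* For every $\mathsf{pGCL}$ program $P\in\mathsf{PAST}$, with initial program state $\sigma_0=(P,\eta_0)$, there exist an ordinal $\mathbf{o}$ and functions $g:\mathcal{R}(\sigma_0)\to\mathbf{o}$ (the rank) and $k$ (the certification), assigning to each $\sigma\in\mathcal{R}(\sigma_0)$ a pair $k(\sigma)=(h_\sigma,\epsilon_\sigma)$ with $h_\sigma:\Sigma\to\mathbb{R}$, $\epsilon_\sigma\in\mathbb{R}$, such that: (1) for every $\sigma\in\mathcal{R}(\sigma_0)$, $g(\sigma)=0$ if and only if $\sigma$ is terminal; (2) for every non-terminal $\sigma\in\mathcal{R}(\sigma_0)$, letting $\mathcal{L}(\sigma)=\{\sigma'\in\mathcal{R}(\sigma)\mid g(\sigma')<g(\sigma)\}$, the pair $(h_\sigma,\epsilon_\sigma)$ is an RSM-map and, for every $\tau\in\Sigma$, $h_\sigma(\tau)=0$ if and only if $\tau\in\mathcal{L}(\sigma)\cup(\Sigma\setminus\mathcal{R}(\sigma))$.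
   Context: pGCL. Fix a countable set $\mathrm{Var}$ of variables taking rational values. Programs are generated by $P ::= \bot \mid v:=e \mid P;P \mid P\oplus_p P \mid P\,[\!]\,P \mid \mathtt{while}(b)\{P\}$ ($v\in\mathrm{Var}$, $e,p$ arithmetical expressions, $b$ boolean expression, $\bot$ the empty program; $\oplus_p$ probabilistic choice, $[\!]$ nondeterministic choice). A valuation is $\eta:\mathrm{Var}\to\mathbb{Q}$. A scheduler is a total function $f:\{L_n,R_n,L_p,R_p\}^*\to\{L_n,R_n\}$; $\mathbb{F}$ is the set of schedulers. An execution state is $(P,\eta,a,w)$ with $a\in\mathbb{Q}\cap(0,1]$, $w\in\{L_n,R_n,L_p,R_p\}^*$; a program state is $(P,\eta)$, $\Sigma$ is the set of program states; states with program $\bot$ are terminal. For $f\in\mathbb{F}$, $\to_f$ is the smallest relation with: $(v:=e,\eta,a,w)\to_f(\bot,\eta[v\mapsto[\![e]\!]_\eta],a,w)$; if $(P_1,\eta,a,w)\to_f(P_1',\eta',a',w')$ then $(P_1;P_2,\eta,a,w)\to_f(P_1';P_2,\eta',a',w')$; $(\bot;P_2,\eta,a,w)\to_f(P_2,\eta,a,w)$; $(P_1\oplus_pP_2,\eta,a,w)\to_f(P_2,\eta,a,wR_p)$ if $[\![p]\!]_\eta\le0$, $\to_f(P_1,\eta,a,wL_p)$ if $[\![p]\!]_\eta\ge1$, and if $0<[\![p]\!]_\eta<1$ both $\to_f(P_1,\eta,a[\![p]\!]_\eta,wL_p)$ and $\to_f(P_2,\eta,a(1-[\![p]\!]_\eta),wR_p)$;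 $(P_1[\!]P_2,\eta,a,w)\to_f(P_1,\eta,a,wL_n)$ if $f(w)=L_n$, $\to_f(P_2,\eta,a,wR_n)$ if $f(w)=R_n$; $(\mathtt{while}(b)\{P\},\eta,a,w)\to_f(P;\mathtt{while}(b)\{P\},\eta,a,w)$ if $b$ holds, else $\to_f(\bot,\eta,a,w)$. $\to_f^n$ ($n\ge1$) is the $n$-fold composition, $\to_f^*=\bigcup_{n\ge1}\to_f^n$. For $\sigma=(P,\eta)$ let $\sigma_e=(P,\eta,1,\varepsilon)$. The initial program state of $P$ is $(P,\eta_0)$, $\eta_0\equiv0$. $\mathrm{Prob}((P,\eta,a,w))=a$. $T_{\le k}(\sigma,f)$ is the set of terminal execution states $\tau$ with $\sigma_e\to_f^n\tau$ for some $n\le k$; $\mathrm{ExpRuntime}(\sigma,f)=\sum_{k\in\mathbb{N}}(1-\sum_{\tau\in T_{\le k}(\sigma,f)}\mathrm{Prob}(\tau))$. $\mathsf{PAST}$ is the set of programs $P$ with $\mathrm{ExpRuntime}((P,\eta_0),f)<\infty$ for all $f$. Reachable states: $\mathcal{R}(\sigma)=\{(P',\eta')\in\Sigma\mid\exists f\in\mathbb{F},\exists a',w':\sigma_e\to_f^*(P',\eta',a',w')\}$. RSM-map: a pair $(h,\epsilon)$ with $h:\Sigma\to[0,\infty)$ and real $\epsilon>0$ such that $h$ maps terminal states to $0$ and for every $\sigma=(P,\eta)$ with $h(\sigma)>0$: (i) if there is $\sigma'=(P',\eta')$ with $(P,\eta,1,\varepsilon)\to_f(P',\eta',1,\varepsilon)$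 for all $f$ (deterministic state), then $h(\sigma')+\epsilon\le h(\sigma)$; (ii) if $\sigma$ is nondeterministic with successors $\sigma_l=(P_l,\eta_l)$, $\sigma_r=(P_r,\eta_r)$ (for every $f$, $(P,\eta,1,\varepsilon)\to_f(P_l,\eta_l,1,L_n)$ or $\to_f(P_r,\eta_r,1,R_n)$), then $\max(h(\sigma_l),h(\sigma_r))+\epsilon\le h(\sigma)$; (iii) if $\sigma$ is probabilistic with probability value $p$ and successors $\sigma_l,\sigma_r$ (for all $f$, $(P,\eta,1,\varepsilon)\to_f(P_l,\eta_l,p,L_p)$ and $\to_f(P_r,\eta_r,1-p,R_p)$), then $p\,h(\sigma_l)+(1-p)h(\sigma_r)+\epsilon\le h(\sigma)$. *)

From HB Require Import structures.
From mathcomp Require Import all_boot all_order all_algebra.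
From mathcomp Require Import all_classical all_reals all_analysis.
From mathcomp Require Import Rstruct Rstruct_topology.
From Stdlib Require Rdefinitions.
Notation R := Rdefinitions.R.

Set Implicit Arguments.
Unset Strict Implicit.
Unset Printing Implicit Defensive.

Import Order.TTheory GRing.Theory Num.Theory.
Local Open Scope ring_scope.
Local Open Scope classical_set_scope.

Definition Var := nat.

Inductive aexp : Type :=
| AConst of rat
| AVar of Var
| AAdd of aexp & aexp
| ASub of aexp & aexp
| AMul of aexp & aexp.

Inductive bexp : Type :=
| BTrue
| BFalse
| BLe of aexp & aexp
| BLt of aexp & aexp
| BEq of aexp & aexp
| BNot of bexp
| BAnd of bexp & bexp
| BOr of bexp & bexp.

(** Programs: Skip is the empty program (bottom). *)
Inductive prog : Type :=
| Skip
| Assign of Var & aexp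
| Seq of prog & prog
| PChoice of prog & aexp & prog
| NChoice of prog & prog
| While of bexp & prog.

Definition valuation := Var -> rat.

Definition upd (eta : valuation) (v : Var) (q : rat) : valuation :=
  fun x => if x == v then q else eta x.

Fixpoint aeval (eta : valuation) (e : aexp) : rat :=
  match e with
  | AConst q => q
  | AVar v => eta v
  | AAdd e1 e2 => aeval eta e1 + aeval eta e2
  | ASub e1 e2 => aeval eta e1 - aeval eta e2
  | AMul e1 e2 => aeval eta e1 * aeval eta e2
  end.

Fixpoint beval (eta : valuation) (b : bexp) : bool :=
  match b with
  | BTrue => true
  | BFalse => false
  | BLe e1 e2 => aeval eta e1 <= aeval eta e2
  | BLt e1 e2 => aeval eta e1 < aeval eta e2
  | BEq e1 e2 => aeval eta e1 == aeval eta e2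
  | BNot b => ~~ beval eta b
  | BAnd b1 b2 => beval eta b1 && beval eta b2
  | BOr b1 b2 => beval eta b1 || beval eta b2
  end.

Inductive dir : Type := Ln | Rn | Lp | Rp.

Inductive ndir : Type := NL | NR.

Definition scheduler := seq dir -> ndir.

Record exstate : Type := ES {
  es_prog : prog;
  es_val : valuation;
  es_prob : rat;
  es_hist : seq dir }.

Definition pstate : Type := (prog * valuation)%type.

Definition pterminal (s : pstate) : Prop := s.1 = Skip.
Definition exterminal (t : exstate) : Prop := es_prog t = Skip.

Inductive step (f : scheduler) : exstate -> exstate -> Prop :=
| st_assign v e eta a w :
    step f (ES (Assign v e) eta a w) (ES Skip (upd eta v (aeval eta e)) a w)
| st_seq P1 P1' P2 eta a w eta' a' w' :
    step f (ES P1 eta a w) (ES P1' eta' a' w') ->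
    step f (ES (Seq P1 P2) eta a w) (ES (Seq P1' P2) eta' a' w')
| st_seq_skip P2 eta a w :
    step f (ES (Seq Skip P2) eta a w) (ES P2 eta a w)
| st_prob_le0 P1 p P2 eta a w :
    aeval eta p <= 0 ->
    step f (ES (PChoice P1 p P2) eta a w) (ES P2 eta a (rcons w Rp))
| st_prob_ge1 P1 p P2 eta a w :
    1 <= aeval eta p ->
    step f (ES (PChoice P1 p P2) eta a w) (ES P1 eta a (rcons w Lp))
| st_prob_L P1 p P2 eta a w :
    0 < aeval eta p < 1 ->
    step f (ES (PChoice P1 p P2) eta a w)
           (ES P1 eta (a * aeval eta p) (rcons w Lp))
| st_prob_R P1 p P2 eta a w :
    0 < aeval eta p < 1 ->
    step f (ES (PChoice P1 p P2) eta a w)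
           (ES P2 eta (a * (1 - aeval eta p)) (rcons w Rp))
| st_nd_L P1 P2 eta a w :
    f w = NL ->
    step f (ES (NChoice P1 P2) eta a w) (ES P1 eta a (rcons w Ln))
| st_nd_R P1 P2 eta a w :
    f w = NR ->
    step f (ES (NChoice P1 P2) eta a w) (ES P2 eta a (rcons w Rn))
| st_while_true b P eta a w :
    beval eta b ->
    step f (ES (While b P) eta a w) (ES (Seq P (While b P)) eta a w)
| st_while_false b P eta a w :
    ~~ beval eta b ->
    step f (ES (While b P) eta a w) (ES Skip eta a w).

(** n-fold composition of ->_f ([stepn f 0] is the identity; only n >= 1 is used). *)
Fixpoint stepn (f : scheduler) (n : nat) (s t : exstate) : Prop :=
  match n with
  | 0 => s = t
  | n'.+1 => exists u, step f s u /\ stepn f n' u t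
  end.

Definition steps (f : scheduler) (s t : exstate) : Prop :=
  exists n : nat, (1 <= n)%N /\ stepn f n s t.

Definition init (s : pstate) : exstate := ES s.1 s.2 1 [::].

Definition eta0 : valuation := fun _ => 0.

Definition Prob (t : exstate) : R := ratr (es_prob t).

HB.instance Definition _ := gen_eqMixin exstate.
HB.instance Definition _ := gen_choiceMixin exstate.

Definition T_le (s : pstate) (f : scheduler) (k : nat) : set exstate :=
  [set t | exterminal t /\ exists n : nat, (1 <= n <= k)%N /\ stepn f n (init s) t].

Definition ExpRuntime (s : pstate) (f : scheduler) : \bar R :=
  (\sum_(0 <= k <oo) (1 - \sum_(t \in T_le s f k) Prob t)%:E)%E.

Definition PAST (P : prog) : Prop :=
  forall f : scheduler, (ExpRuntime (P, eta0) f < +oo)%E.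

Definition Reach (s : pstate) : set pstate :=
  [set s' | exists (f : scheduler) (a : rat) (w : seq dir),
      steps f (init s) (ES s'.1 s'.2 a w)].

Definition RSM_map (h : pstate -> R) (eps : R) : Prop :=
  [/\ (forall s, 0 <= h s),
      0 < eps,
      (forall s, pterminal s -> h s = 0) &
      forall s, 0 < h s ->
        [/\ (* (i) deterministic states *)
            (forall s' : pstate,
               (forall f, step f (init s) (ES s'.1 s'.2 1 [::])) ->
               h s' + eps <= h s),
            (* (ii) nondeterministic states *)
            (forall sl sr : pstate,
               (forall f, step f (init s) (ES sl.1 sl.2 1 [:: Ln]) \/
                          step f (init s) (ES sr.1 sr.2 1 [:: Rn])) ->
               Num.max (h sl) (h sr) + eps <= h s) &
            (* (iii) probabilistic states *)
            (forall (p : rat) (sl sr : pstate),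
               (forall f, step f (init s) (ES sl.1 sl.2 p [:: Lp]) /\
                          step f (init s) (ES sr.1 sr.2 (1 - p) [:: Rp])) ->
               ratr p * h sl + (1 - ratr p) * h sr + eps <= h s)]].

(** An ordinal is represented (up to isomorphism) by a type with a strict
    well-order. *)
Definition well_order (O : Type) (lt : O -> O -> Prop) : Prop :=
  [/\ well_founded lt,
      (forall x y z, lt x y -> lt y z -> lt x z) &
      (forall x y, lt x y \/ x = y \/ lt y x)].

Definition is_zero (O : Type) (lt : O -> O -> Prop) (x : O) : Prop :=
  forall y, ~ lt y x.

From HB Require Import structures.
From mathcomp Require Import all_boot all_order all_algebra.
From mathcomp Require Import all_classical all_reals all_analysis.
From mathcomp Require Import Rstruct Rstruct_topology.
From mathcomp Require Import lra.
From Stdlib Require Import Relation_Operators.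
Import Order.TTheory GRing.Theory Num.Theory.
Local Open Scope ring_scope.
Local Open Scope classical_set_scope.
Set Implicit Arguments.
Unset Strict Implicit.
Unset Printing Implicit Defensive.

(* Ranks come from a transfinite iteration.  For a set Z of states, let
   Phi(Z) be the set of states from which every reachable state reaches
   Z or terminates within an expected number of steps that is bounded
   uniformly over schedulers.  Starting from the terminal states, applying
   Phi at successor stages and taking unions at limit stages gives a tower
   of sets that is well ordered by inclusion, and the rank of a state is
   the first stage containing it.

   PAST puts every reachable state into the union U of all stages, a fixed
   point of Phi.  Otherwise some state reachable from a reachable state
   outside U has unbounded expected time to reach U.  A scheduler can reach
   that state with positive probability, collect an expected runtime of at
   least j, and still be outside U with positive probability.  Doing this
   for j = 0, 1, 2, ... and gluing the phases into a single scheduler gives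
   an infinite expected runtime.

   A non-terminal sigma lies in Phi(Y) for some stage Y that does not
   contain it, and all states of Y have smaller rank than sigma.  So on the
   states reachable from sigma, the expected time to reach a smaller rank
   is bounded uniformly over schedulers.  Its supremum over schedulers
   drops by 1 in expectation along every step, so it is an RSM-map with
   epsilon = 1. *)

Lemma ler_sum_mem (K : numDomainType) (I : eqType) (r : seq I) (F G : I -> K) :
  (forall i, i \in r -> F i <= G i) -> \sum_(i <- r) F i <= \sum_(i <- r) G i.
Proof. by move=> FG; rewrite big_seq [leRHS]big_seq; exact: ler_sum. Qed.

Lemma ler_sum_elem (K : numDomainType) (I : eqType) (r : seq I) (F : I -> K) i :
  (forall j, j \in r -> 0 <= F j) -> i \in r -> F i <= \sum_(j <- r) F j.
Proof.
move=> F0 ir; rewrite (big_rem _ ir) /= lerDl big_seq_cond sumr_ge0 // => j /andP[jr _].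
exact/F0/(mem_rem jr).
Qed.

Lemma ler_sum_undup (K : numDomainType) (I : eqType) (s : seq I) (P : pred I)
    (F : I -> K) :
  (forall i, i \in s -> 0 <= F i) ->
  \sum_(i <- undup s | P i) F i <= \sum_(i <- s | P i) F i.
Proof.
elim: s => [|a s IH] F0 //=.
have F0' i : i \in s -> 0 <= F i by move=> si; apply: F0; rewrite inE si orbT.
rewrite [leRHS]big_cons; case: ifP => aS.
  apply: le_trans (IH F0') _; case: ifP => // _.
  by rewrite lerDr; apply: F0; exact: mem_head.
by rewrite big_cons; case: ifP => _; rewrite ?lerD2l; exact: IH F0'.
Qed.

Lemma sup_affine_le (K : realType) (S : set K) (a c M : K) : S !=set0 -> 0 < a ->
  (forall x, S x -> a * x + c <= M) -> a * sup S + c <= M.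
Proof.
move=> S0 a0 SM; rewrite -lerBrDr -ler_pdivlMl //.
by apply: ge_sup => // x Sx; rewrite ler_pdivlMl // lerBrDr; exact: SM.
Qed.

Lemma dependent_choice (A : Type) (I : A -> Prop) (Q : nat -> A -> A -> Prop) (a0 : A) :
  I a0 -> (forall j a, I a -> exists2 b, I b & Q j a b) ->
  exists u : nat -> A, forall j, I (u j) /\ Q j (u j) (u j.+1).
Proof.
move=> Ia0 ex.
have next j (a : {a | I a}) : {b : {a | I a} | Q j (sval a) (sval b)}.
  by have /cid2[b Ib Qb] := ex j _ (svalP a); exists (exist _ b Ib).
pose fix u j : {a | I a} := if j is j'.+1 then sval (next j' (u j')) else exist _ a0 Ia0.
by exists (fun j => sval (u j)) => j; split; [exact: svalP | exact: svalP (next j (u j))].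
Qed.

Lemma stabilizing_limit (A B : Type) (F : nat -> A -> B) (D : nat -> set A) :
  (forall j, D j.+1 `<=` D j) -> (forall j v, ~ D j v -> F j.+1 v = F j v) ->
  exists G, forall j v, ~ D j v -> G v = F j v.
Proof.
move=> Ddec FD.
have Dmono j d : D (j + d)%N `<=` D j.
  by elim: d => [|d IH]; rewrite ?addn0 // addnS; exact: subset_trans (Ddec _) IH.
have stable j d v : ~ D j v -> F (j + d)%N v = F j v.
  move=> nv; elim: d => [|d IH]; first by rewrite addn0.
  by rewrite addnS FD // => /Dmono.
exists (fun v => if pselect (exists j, ~ D j v) is left e then F (sval (cid e)) v else F 0%N v).
move=> j v nv; case: pselect => [e|]; last by case; exists j.
case: cid => m nm /=; have [jm|mj] := leqP j m.
  by rewrite -(subnKC jm) stable.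
by rewrite -(subnKC (ltnW mj)) stable.
Qed.

(** * Well-ordered towers *)

Section Tower.
Variables (T : Type) (base : set T) (Phi : set T -> set T).

Inductive tower : set T -> Prop :=
| tower_base : tower base
| tower_Phi X : tower X -> tower (Phi X)
| tower_union (F : set (set T)) :
    (forall X, F X -> tower X) -> tower (base `|` \bigcup_(X in F) X).

Definition top : set T := base `|` \bigcup_(X in tower) X.

Lemma tower_top : tower top.
Proof. exact: tower_union. Qed.

Lemma sub_top X : tower X -> X `<=` top.
Proof. by move=> tX x Xx; right; exists X. Qed.

Lemma Phi_top_sub : Phi top `<=` top.
Proof. exact/sub_top/tower_Phi/tower_top. Qed.

Lemma tower_Phi_step X x : tower X -> X x -> ~ base x ->
  exists Y, [/\ tower Y, ~ Y x & Phi Y x].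
Proof.
move=> tX; elim: tX x => [|Y tY IH|F tF IH] x Xx nbx; first by [].
  by have [Yx|nYx] := pselect (Y x); [exact: IH | exists Y].
by case: Xx => [//|[Y FY Yx]]; exact: IH FY x Yx nbx.
Qed.

Hypothesis Phi_infl : forall X, tower X -> X `<=` Phi X.

Lemma base_sub X : tower X -> base `<=` X.
Proof.
elim=> [//|Y tY IH|F _ _]; first exact: subset_trans IH (Phi_infl tY).
by move=> x bx; left.
Qed.

Definition extreme (X : set T) : Prop :=
  forall Y, tower Y -> Y `<` X -> Phi Y `<=` X.

Lemma extreme_split X Y : tower X -> extreme X -> tower Y ->
  Y `<=` X \/ Phi X `<=` Y.
Proof.
move=> tX eX; elim=> [|{}Y tY [YX|PXY]|F tF IH].
- by left; exact: base_sub.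
- have [XY|nXY] := pselect (X `<=` Y); last by left; exact: eX.
  by right; have -> : Y = X by apply/seteqP.
- by right; exact: subset_trans PXY (Phi_infl tY).
- have [allF|/existsNP[Z /not_implyP[FZ nZX]]] := pselect (forall Z, F Z -> Z `<=` X).
    by left=> x [/(base_sub tX)//|[Z /allF]]; apply.
  have [//|PXZ] := IH Z FZ.
  by right=> x /PXZ Zx; right; exists Z.
Qed.

Lemma union_above F Y : (forall X, F X -> tower X) -> (forall X, F X -> extreme X) ->
  tower Y -> ~ (base `|` \bigcup_(X in F) X) `<=` Y -> exists2 X, F X & Y `<=` X.
Proof.
move=> tF eF tY nUY.
have [X FX nPXY] : exists2 X, F X & ~ Phi X `<=` Y.
  apply: contrapT => none; apply: nUY => x [/(base_sub tY)//|[X FX Xx]].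
  have : Phi X `<=` Y by apply: contrapT => nPXY; apply: none; exists X.
  by apply; exact: Phi_infl (tF X FX) _ Xx.
by exists X => //; case: (extreme_split (tF X FX) (eF X FX) tY).
Qed.

Lemma tower_extreme X : tower X -> extreme X.
Proof.
elim=> [|{}X tX eX|F tF eF] Y tY [YX nXY].
- by case: nXY; exact: base_sub.
- case: (extreme_split tX eX tY) => [YX'|//].
  have [XY|nXY'] := pselect (X `<=` Y).
    by have -> : Y = X by apply/seteqP.
  exact: subset_trans (eX Y tY (conj YX' nXY')) (Phi_infl tX).
- have [W FW YW] := union_above tF eF tY nXY.
  have [WY|nWY] := pselect (W `<=` Y).
    have EYW : Y = W by apply/seteqP.
    case: (extreme_split (tF W FW) (eF W FW) (tower_union tF)) => [UW|].
      by case: nXY; rewrite EYW.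
    by rewrite EYW.
  by move=> x /(eF W FW Y tY (conj YW nWY)) Wx; right; exists W.
Qed.

Lemma tower_total X Y : tower X -> tower Y -> X `<=` Y \/ Y `<=` X.
Proof.
move=> tX tY; case: (extreme_split tX (tower_extreme tX) tY) => [|PXY]; first by right.
by left; exact: subset_trans (Phi_infl tX) PXY.
Qed.

Lemma tower_acc X : tower X -> Acc (fun A B => tower A /\ A `<` B) X.
Proof.
elim=> [|{}X tX IH|F tF IH]; constructor=> Y [tY [YX nXY]].
- by case: nXY; exact: base_sub.
- case: (extreme_split tX (tower_extreme tX) tY) => [YX'|//].
  have [XY|nXY'] := pselect (X `<=` Y); last by apply: (Acc_inv IH); split=> //; split.
  by have <- : X = Y by apply/seteqP.
- have [W FW YW] := union_above tF (fun W FW => tower_extreme (tF W FW)) tY nXY.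
  have [WY|nWY] := pselect (W `<=` Y); last by apply: (Acc_inv (IH W FW)); split=> //; split.
  have <- : W = Y by apply/seteqP.
  exact: IH.
Qed.

(* Stages, strictly ordered by inclusion, serve as the ordinals. *)
Definition stage := {X : set T | tower X}.

Definition stage_lt (a b : stage) : Prop := sval a `<` sval b.

Lemma stage_eq (a b : stage) : sval a = sval b -> a = b.
Proof. by apply: eq_sig_hprop => X p q; exact: Prop_irrelevance. Qed.

Lemma stage_lt_wf : well_founded stage_lt.
Proof.
suff accP X : Acc (fun A B => tower A /\ A `<` B) X ->
    forall a : stage, sval a = X -> Acc stage_lt a.
  by move=> a; exact: accP (tower_acc (svalP a)) a erefl.
elim=> {}X _ IH a aX; constructor=> b ba.
by apply: (IH (sval b)) => //; rewrite -aX; split=> //; exact: svalP.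
Qed.

Lemma stage_lt_well_order : well_order stage_lt.
Proof.
split; first exact: stage_lt_wf.
- move=> a b c [ab nba] [bc ncb]; split; first exact: subset_trans ab bc.
  by move=> ca; apply: ncb; exact: subset_trans ca ab.
- move=> a b; have [ab|ba] := tower_total (svalP a) (svalP b).
  + have [ba|nba] := pselect (sval b `<=` sval a); last by left.
    by right; left; apply: stage_eq; apply/seteqP.
  + have [ab|nab] := pselect (sval a `<=` sval b); last by right; right.
    by right; left; apply: stage_eq; apply/seteqP.
Qed.

Definition bottom : stage := exist _ base tower_base.

Definition least_stage (x : T) (a : stage) : Prop :=
  sval a x /\ forall b : stage, sval b x -> sval a `<=` sval b.

Definition rank (x : T) : stage :=
  if pselect (exists a, least_stage x a) is left ex then sval (cid ex) else bottom.

Lemma rankP x : top x -> least_stage x (rank x).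
Proof.
move=> topx; rewrite /rank; case: pselect => [ex|nex]; first by case: cid.
suff none (a : stage) : ~ sval a x.
  by case: topx => [bx|[X tX Xx]]; [case: (none bottom) | case: (none (exist _ X tX))].
elim/(well_founded_induction stage_lt_wf): a => a IH ax.
apply: nex; exists a; split=> // b bx.
have [//|ba] := tower_total (svalP a) (svalP b).
by apply: contrapT => nab; exact: IH b (conj ba nab) bx.
Qed.

Lemma rank_zero x : top x -> (is_zero stage_lt (rank x) <-> base x).
Proof.
move=> /rankP[rx rmin]; split=> [z|bx b [_ nsub]].
- apply: contrapT => nbx; apply: (z bottom); split; first exact: base_sub (svalP (rank x)).
  by move=> /(_ x rx).
- by apply: nsub; exact: subset_trans (rmin bottom bx) (base_sub (svalP b)).
Qed.

Lemma rank_base_lt x y : top x -> ~ base x -> top y -> base y ->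
  stage_lt (rank y) (rank x).
Proof.
move=> /rankP[rx _] nbx /rankP[_ rymin] bY; split.
  exact: subset_trans (rymin bottom bY) (base_sub (svalP (rank x))).
by move=> /(_ x rx) /(rymin bottom bY).
Qed.

Lemma rank_below x : top x -> ~ base x ->
  exists Y, [/\ tower Y, Phi Y x & Y `<=` [set y | stage_lt (rank y) (rank x)]].
Proof.
move=> topx nbx; have [rx _] := rankP topx.
have [Y [tY nYx PYx]] := tower_Phi_step (svalP (rank x)) rx nbx.
exists Y; split=> // y Yy.
have [_ rymin] := rankP (sub_top tY Yy).
have rY : sval (rank y) `<=` Y := rymin (exist _ Y tY) Yy.
have Yrx : Y `<=` sval (rank x).
  by case: (tower_total tY (svalP (rank x))) => // /(_ x rx).
by split; [exact: subset_trans rY Yrx | move=> /(_ x rx) /rY].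
Qed.

End Tower.

(** * One-step semantics *)

HB.instance Definition _ := gen_eqMixin dir.

(* [Forced b u] is a probabilistic choice whose probability is [<= 0] or
   [>= 1]: it takes the left branch iff [b], without scaling the probability. *)
Inductive transition : Type :=
| Halt
| Tau of pstate
| Forced of bool & pstate
| Branch of pstate & pstate
| Coin of rat & pstate & pstate.

Definition map_transition (m : pstate -> pstate) (t : transition) : transition :=
  match t with
  | Halt => Halt
  | Tau u => Tau (m u)
  | Forced b u => Forced b (m u)
  | Branch l r => Branch (m l) (m r)
  | Coin p l r => Coin p (m l) (m r)
  end.

Definition seq_with (Q : prog) (u : pstate) : pstate := (Seq u.1 Q, u.2).

Fixpoint transition_of (P : prog) (eta : valuation) : transition :=
  match P with
  | Skip => Halt
  | Assign v e => Tau (Skip, upd eta v (aeval eta e))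
  | Seq P1 P2 =>
      if P1 is Skip then Tau (P2, eta) else map_transition (seq_with P2) (transition_of P1 eta)
  | PChoice P1 p P2 =>
      if aeval eta p <= 0 then Forced false (P2, eta)
      else if 1 <= aeval eta p then Forced true (P1, eta)
      else Coin (aeval eta p) (P1, eta) (P2, eta)
  | NChoice P1 P2 => Branch (P1, eta) (P2, eta)
  | While b Q => Tau (if beval eta b then Seq Q (While b Q) else Skip, eta)
  end.

Definition halted (s : pstate) : bool := if transition_of s.1 s.2 is Halt then true else false.

Definition is_tau (s : pstate) : bool := if transition_of s.1 s.2 is Tau _ then true else false.

Definition pst (x : exstate) : pstate := (es_prog x, es_val x).

Definition at_state (u : pstate) (a : rat) (w : seq dir) : exstate := ES u.1 u.2 a w.

Lemma pst_init s : pst (init s) = s.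
Proof. by case: s. Qed.

Lemma pst_at u a w : pst (at_state u a w) = u.
Proof. by case: u. Qed.

Definition succs (f : scheduler) (x : exstate) : seq exstate :=
  let a := es_prob x in let w := es_hist x in
  match transition_of (es_prog x) (es_val x) with
  | Halt => [::]
  | Tau u => [:: at_state u a w]
  | Forced b u => [:: at_state u a (rcons w (if b then Lp else Rp))]
  | Branch l r =>
      [:: if f w is NL then at_state l a (rcons w Ln) else at_state r a (rcons w Rn)]
  | Coin p l r => [:: at_state l (a * p) (rcons w Lp); at_state r (a * (1 - p)) (rcons w Rp)]
  end.

Lemma succs_halted f x : halted (pst x) -> succs f x = [::].
Proof. by rewrite /halted /succs /=; case: transition_of. Qed.

Lemma transition_of_Seq P1 P2 eta : P1 <> Skip ->
  transition_of (Seq P1 P2) eta = map_transition (seq_with P2) (transition_of P1 eta).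
Proof. by case: P1. Qed.

Definition seq_after (Q : prog) (x : exstate) : exstate :=
  ES (Seq (es_prog x) Q) (es_val x) (es_prob x) (es_hist x).

Lemma succs_Seq f P1 P2 eta a w : P1 <> Skip ->
  succs f (ES (Seq P1 P2) eta a w) = map (seq_after P2) (succs f (ES P1 eta a w)).
Proof.
by move=> P1ns; rewrite /succs transition_of_Seq //=; case: transition_of => //= l r; case: (f w).
Qed.

Lemma step_succs f x y : step f x y <-> y \in succs f x.
Proof.
split.
- elim=> {x y} /=.
  + by move=> *; rewrite /succs /= inE.
  + move=> P1 P1' P2 eta a w eta' a' w' _ IH.
    have P1ns : P1 <> Skip by move=> E; move: IH; rewrite E.
    by rewrite succs_Seq //; exact: (map_f (seq_after P2) IH).
  + by move=> *; rewrite /succs /= inE.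
  + by move=> P1 p P2 eta a w p0; rewrite /succs /= p0 inE.
  + move=> P1 p P2 eta a w p1.
    by rewrite /succs /= leNgt (lt_le_trans ltr01 p1) p1 inE.
  + by move=> P1 p P2 eta a w /andP[p0 p1]; rewrite /succs /= leNgt p0 leNgt p1 !inE eqxx.
  + by move=> P1 p P2 eta a w /andP[p0 p1]; rewrite /succs /= leNgt p0 leNgt p1 !inE eqxx orbT.
  + by move=> P1 P2 eta a w fw; rewrite /succs /= fw inE.
  + by move=> P1 P2 eta a w fw; rewrite /succs /= fw inE.
  + by move=> b P eta a w bt; rewrite /succs /= bt inE.
  + by move=> b P eta a w /negbTE bf; rewrite /succs /= bf inE.
- case: x => P eta a w.
  elim: P eta a w y => [|v e|P1 IH1 P2 _|P1 _ p P2 _|P1 _ P2 _|b Q _] eta a w y.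
  + by [].
  + by rewrite /succs inE => /eqP ->; exact: st_assign.
  + have [->|P1ns] := pselect (P1 = Skip).
      by rewrite /succs inE => /eqP ->; exact: st_seq_skip.
    by rewrite succs_Seq // => /mapP[[P1' eta' a' w'] /IH1 st ->]; exact: st_seq.
  + rewrite /succs /=; case: ifP => p0; first by rewrite inE => /eqP ->; exact: st_prob_le0.
    case: ifP => p1; first by rewrite inE => /eqP ->; exact: st_prob_ge1.
    have p01 : 0 < aeval eta p < 1 by rewrite !ltNge p0 p1.
    by rewrite !inE => /orP[] /eqP ->; [exact: st_prob_L | exact: st_prob_R].
  + by rewrite /succs /=; case fw: (f w); rewrite inE => /eqP ->;
      [exact: st_nd_L | exact: st_nd_R].
  + rewrite /succs /=; case: ifP => bv; rewrite inE => /eqP ->.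
      exact: st_while_true.
    by apply: st_while_false; rewrite bv.
Qed.

Lemma transition_of_Halt P eta : transition_of P eta = Halt -> P = Skip.
Proof.
elim: P eta => //= [P1 IH1 P2 _|P1 _ p P2 _] eta.
- have [->//|P1ns] := pselect (P1 = Skip).
  rewrite -/(transition_of (Seq P1 P2) eta) transition_of_Seq //.
  by case E: transition_of => //= _; case: P1ns; exact: IH1 E.
- by case: ifP => // _; case: ifP.
Qed.

Lemma haltedP s : halted s <-> pterminal s.
Proof.
rewrite /halted /pterminal; split; last by case: s => P eta /= ->.
by case E: transition_of => // _; exact: transition_of_Halt E.
Qed.

Lemma transition_of_Coin P eta p l r : transition_of P eta = Coin p l r -> 0 < p < 1.
Proof.
elim: P eta p l r => //= [P1 IH1 P2 _|P1 _ q P2 _] eta p l r.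
- have [->//|P1ns] := pselect (P1 = Skip).
  rewrite -/(transition_of (Seq P1 P2) eta) transition_of_Seq //.
  by case E: transition_of => //= -[<- _ _]; exact: IH1 E.
- by case: ifP => // q0; case: ifP => // q1 [<- _ _]; rewrite !ltNge q0 q1.
Qed.

Lemma sum_succs_prob f x : ~~ halted (pst x) ->
  \sum_(z <- succs f x) ratr (es_prob z) = ratr (es_prob x) :> R.
Proof.
rewrite /halted /succs /=; case: transition_of => //= [u|b u|l r|p l r] _.
- by rewrite big_seq1.
- by rewrite big_seq1.
- by case: (f _); rewrite big_seq1.
by rewrite big_cons big_seq1 /= -rmorphD /= -mulrDr addrC subrK mulr1.
Qed.

Lemma succs_prob_gt0 f x z : 0 < es_prob x -> z \in succs f x -> 0 < es_prob z.
Proof.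
rewrite /succs; case E: transition_of => //= [u|b u|l r|p l r] a0; rewrite ?mem_seq1 ?mem_seq2.
- by move=> /eqP ->.
- by move=> /eqP ->.
- by case: (f _) => /eqP ->.
- have /andP[p0 p1] := transition_of_Coin E.
  by move=> /orP[] /eqP -> /=; rewrite mulr_gt0 // subr_gt0.
Qed.

Lemma succs_hist f x z : z \in succs f x -> prefix (es_hist x) (es_hist z).
Proof.
rewrite /succs; case: transition_of => //= [u|b u|l r|p l r]; rewrite ?mem_seq1 ?mem_seq2.
- by move=> /eqP ->; exact: prefix_refl.
- by move=> /eqP ->; exact: prefix_rcons.
- by case: (f _) => /eqP ->; exact: prefix_rcons.
- by move=> /orP[] /eqP ->; exact: prefix_rcons.
Qed.

Lemma succs_hist_grow f x z : z \in succs f x -> ~~ is_tau (pst x) ->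
  (size (es_hist x) < size (es_hist z))%N.
Proof.
rewrite /succs /is_tau /=; case: transition_of => //= [b u|l r|p l r]; rewrite ?mem_seq1 ?mem_seq2.
- by move=> /eqP -> _; rewrite size_rcons.
- by case: (f _) => /eqP -> _; rewrite size_rcons.
- by move=> /orP[] /eqP -> _; rewrite size_rcons.
Qed.

Lemma succs_hist_inj f x z z' v : z \in succs f x -> z' \in succs f x ->
  prefix (es_hist z) v -> prefix (es_hist z') v -> z = z'.
Proof.
rewrite /succs; case: transition_of => //= [u|b u|l r|p l r]; rewrite ?mem_seq1 ?mem_seq2.
- by move=> /eqP -> /eqP ->.
- by move=> /eqP -> /eqP ->.
- by case: (f _) => /eqP -> /eqP ->.
- have same d d' : prefix (rcons (es_hist x) d) v -> prefix (rcons (es_hist x) d') v -> d = d'.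
    by rewrite !prefixE !size_rcons => /eqP ->; rewrite eqseq_rcons eqxx => /eqP.
  move=> /orP[] /eqP -> /orP[] /eqP -> //= zv z'v.
  + by have := same _ _ zv z'v.
  + by have := same _ _ zv z'v.
Qed.

Lemma succs_sched f f' x : (~~ is_tau (pst x) -> f (es_hist x) = f' (es_hist x)) ->
  succs f x = succs f' x.
Proof. by rewrite /succs /is_tau /=; case: transition_of => // l r ->. Qed.

Definition rebase (h : seq dir) (c : rat) (x : exstate) : exstate :=
  ES (es_prog x) (es_val x) (c * es_prob x) (h ++ es_hist x).

Lemma succs_rebase f g h c x : (forall v, g v = f (h ++ v)) ->
  succs f (rebase h c x) = map (rebase h c) (succs g x).
Proof.
move=> gf; rewrite /succs /rebase /=; case: transition_of => //= [b u|l r|p l r].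
- by rewrite rcons_cat.
- by rewrite gf; case: (f _); rewrite /= rcons_cat.
- by rewrite !rcons_cat !mulrA.
Qed.

Lemma stepn_add f n m x y :
  stepn f (n + m) x y <-> exists z, stepn f n x z /\ stepn f m z y.
Proof.
elim: n x => [|n IH] x /=; first by split; [exists x | case=> z [->]].
split=> [[u [xu /IH[z [uz zy]]]]|[z [[u [xu uz]] zy]]]; first by exists z; split=> //; exists u.
by exists u; split=> //; apply/IH; exists z.
Qed.

Lemma stepn_rebase f g h c n x y : (forall v, g v = f (h ++ v)) ->
  stepn g n x y -> stepn f n (rebase h c x) (rebase h c y).
Proof.
move=> gf; elim: n x => [|n IH] x /=; first by move->.
case=> u [/step_succs xu uy]; exists (rebase h c u); split; last exact: IH.
by apply/step_succs; rewrite (succs_rebase c x gf) map_f.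
Qed.

Lemma stepn_prob_gt0 f n x y : 0 < es_prob x -> stepn f n x y -> 0 < es_prob y.
Proof.
elim: n x => [|n IH] x /=; first by move=> ? <-.
by move=> x0 [u [/step_succs xu uy]]; exact: IH (succs_prob_gt0 x0 xu) uy.
Qed.

Lemma stepn_hist f n x y : stepn f n x y -> prefix (es_hist x) (es_hist y).
Proof.
elim: n x => [|n IH] x /=; first by move=> ->; exact: prefix_refl.
by case=> u [/step_succs/succs_hist xu /IH]; exact: prefix_trans.
Qed.

Lemma stepn_sched_agree f f' n x y : (forall v, ~~ prefix (es_hist y) v -> f v = f' v) ->
  stepn f n x y -> stepn f' n x y.
Proof.
move=> ff'; elim: n x => [|n IH] x //=; case=> u [/step_succs xu uy].
exists u; split; last exact: IH.
apply/step_succs; rewrite -(succs_sched (f := f)) // => ntau; apply: ff'.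
apply/negP => yx; have := succs_hist_grow xu ntau.
by rewrite ltnNge (leq_trans (size_prefix (stepn_hist uy)) (size_prefix yx)).
Qed.

Lemma stepn_hist_inj f n x y y' v : stepn f n x y -> stepn f n x y' ->
  prefix (es_hist y) v -> prefix (es_hist y') v -> y = y'.
Proof.
elim: n x => [|n IH] x /=; first by move=> <- <-.
move=> [u [/step_succs xu uy]] [u' [/step_succs xu' u'y']] yv y'v.
have uu' : u = u'.
  apply: (succs_hist_inj xu xu'); [exact: prefix_trans (stepn_hist uy) yv
                                  | exact: prefix_trans (stepn_hist u'y') y'v].
by subst u'; exact: IH uy u'y' yv y'v.
Qed.

Lemma stepn_later_hist f i k x y z : stepn f i x y -> stepn f k x z -> (i < k)%N ->
  prefix (es_hist z) (es_hist y) -> is_tau (pst y).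
Proof.
move=> xy xz ik zy; move: xz; rewrite -(subnKC (ltnW ik)) => /stepn_add[y' [xy' y'z]].
have yy' : y = y'.
  by apply: (stepn_hist_inj xy xy' (prefix_refl _)); exact: prefix_trans (stepn_hist y'z) zy.
subst y'; move: y'z; rewrite -(subnSK ik) => -[u [/step_succs yu uz]].
apply: contraT => ntau; have := succs_hist_grow yu ntau.
by rewrite ltnNge (leq_trans (size_prefix (stepn_hist uz)) (size_prefix zy)).
Qed.

Definition splice (F : scheduler) (w : seq dir) (f : scheduler) : scheduler :=
  fun v => if prefix w v then f (drop (size w) v) else F v.

Lemma splice_cat F w f v : splice F w f (w ++ v) = f v.
Proof. by rewrite /splice prefix_prefix drop_size_cat. Qed.

Lemma splice_out F w f v : ~~ prefix w v -> splice F w f v = F v.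
Proof. by rewrite /splice => /negbTE ->. Qed.

Lemma splice_run F w f s0 K u b L y :
  stepn F K (init s0) (at_state u b w) -> stepn f L (init u) y ->
  stepn (splice F w f) (K + L) (init s0) (rebase w b y).
Proof.
move=> run1 run2; apply/stepn_add; exists (at_state u b w); split.
  by apply: stepn_sched_agree run1 => v nv; rewrite splice_out.
have -> : at_state u b w = rebase w b (init u) by rewrite /rebase /= mulr1 cats0.
exact: stepn_rebase (fun v => esym (splice_cat F w f v)) run2.
Qed.

Lemma Reach_succs f s t z : Reach s t -> z \in succs f (init t) -> Reach s (pst z).
Proof.
move=> [f0 [a0 [w0 [n [_ run]]]]] tz.
exists (splice f0 w0 f), (a0 * es_prob z), (w0 ++ es_hist z), (n + 1)%N.
split; first by rewrite addn1.
have step1 : stepn f 1 (init t) z by exists z; split=> //; exact/step_succs.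
exact: splice_run run step1.
Qed.

Definition succ_state (x y : pstate) : Prop :=
  match transition_of x.1 x.2 with
  | Halt => False
  | Tau u | Forced _ u => y = u
  | Branch l r | Coin _ l r => y = l \/ y = r
  end.

Definition reachable : pstate -> pstate -> Prop := clos_refl_trans_1n pstate succ_state.

Lemma succs_succ_state f x z : z \in succs f x -> succ_state (pst x) (pst z).
Proof.
rewrite /succs /succ_state /pst /=.
case: transition_of => //= [u|b u|l r|p l r]; rewrite ?mem_seq1 ?mem_seq2.
- by move=> /eqP ->; case: u.
- by move=> /eqP ->; case: u.
- by case: (f _) => /eqP -> /=; [left; case: l | right; case: r].
- by move=> /orP[] /eqP -> /=; [left; case: l | right; case: r].
Qed.

Lemma stepn_reachable f n x y : stepn f n x y -> reachable (pst x) (pst y).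
Proof.
elim: n x => [|n IH] x /=; first by move=> ->; exact: rt1n_refl.
by case=> u [/step_succs/succs_succ_state xu /IH]; exact: rt1n_trans.
Qed.

Lemma Reach_reachable s t : Reach s t -> reachable s t.
Proof.
by case=> f [a [w [n [_ /stepn_reachable]]]]; rewrite pst_init; case: t.
Qed.

Lemma stepnS_succs f x z n y : z \in succs f x ->
  stepn f n (at_state (pst z) 1 (es_hist z)) y -> stepn f n.+1 x (rebase [::] (es_prob z) y).
Proof.
move=> xz zy; exists z; split; first by apply/step_succs.
have := stepn_rebase (h := [::]) (es_prob z) (fun v => erefl) zy.
by rewrite /rebase /= mulr1; case: z {xz zy}.
Qed.

(** * Truncated expected runtimes *)

Definition stopped (Z : set pstate) (x : pstate) : bool := (x \in Z) || halted x.

Lemma stoppedW Z Z' x : Z `<=` Z' -> stopped Z x -> stopped Z' x.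
Proof. by move=> ZZ'; rewrite /stopped => /orP[/set_mem/ZZ'/mem_set ->|->]; rewrite ?orbT. Qed.

(* The scheduler has already seen the history [w]; the probability mass at
   [x] is normalised to 1. *)
Fixpoint ert (Z : set pstate) (f : scheduler) (w : seq dir) (n : nat) (x : pstate) : R :=
  if n is n'.+1 then
    if stopped Z x then 0 else
      1 + \sum_(z <- succs f (at_state x 1 w)) ratr (es_prob z) * ert Z f (es_hist z) n' (pst z)
  else 0.

Lemma ert_stopped Z f w n x : stopped Z x -> ert Z f w n x = 0.
Proof. by case: n => //= n ->. Qed.

Lemma ertS Z f w n x : ~~ stopped Z x -> ert Z f w n.+1 x =
  1 + \sum_(z <- succs f (at_state x 1 w)) ratr (es_prob z) * ert Z f (es_hist z) n (pst z).
Proof. by move=> /negbTE /= ->. Qed.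

Lemma weight_ge0 f x w z : z \in succs f (at_state x 1 w) -> 0 <= ratr (es_prob z) :> R.
Proof. by move=> /(succs_prob_gt0 (x := at_state x 1 w) ltr01) z0; rewrite ler0q ltW. Qed.

Lemma ert_ge0 Z f w n x : 0 <= ert Z f w n x.
Proof.
elim: n w x => [|n IH] w x //=; case: ifP => // _.
rewrite addr_ge0 // big_seq sumr_ge0 // => z zs.
by rewrite mulr_ge0 //; exact: weight_ge0 zs.
Qed.

Lemma ert_leS Z f w n x : ert Z f w n x <= ert Z f w n.+1 x.
Proof.
elim: n w x => [|n IH] w x; first exact: ert_ge0.
have [sx|nsx] := boolP (stopped Z x); first by rewrite !ert_stopped.
rewrite !ertS // lerD2l; apply: ler_sum_mem => z zs.
by apply: ler_wpM2l; [exact: weight_ge0 zs | exact: IH].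
Qed.

Lemma ert_homo Z f w x : {homo (fun n => ert Z f w n x) : n m / (n <= m)%N >-> n <= m}.
Proof. by apply/nondecreasing_seqP => n; exact: ert_leS. Qed.

Lemma ertS_le Z f w n x : ert Z f w n.+1 x <= ert Z f w n x + 1.
Proof.
elim: n w x => [|n IH] w x.
  have [sx|nsx] := boolP (stopped Z x); first by rewrite ert_stopped //= add0r ler01.
  by rewrite ertS //= big1 ?addr0 ?add0r // => z _; rewrite mulr0.
have [sx|nsx] := boolP (stopped Z x); first by rewrite ert_stopped ?addr_ge0 ?ert_ge0.
have nhx : ~~ halted (pst (at_state x 1 w)).
  by move: nsx; rewrite pst_at; apply: contraNN => hx; rewrite /stopped hx orbT.
rewrite !ertS // -addrA lerD2l.
apply: (@le_trans _ _ (\sum_(z <- succs f (at_state x 1 w))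
                        ratr (es_prob z) * (ert Z f (es_hist z) n (pst z) + 1))).
  by apply: ler_sum_mem => z zs; apply: ler_wpM2l; [exact: weight_ge0 zs | exact: IH].
under eq_bigr do rewrite mulrDr mulr1.
by rewrite big_split /= sum_succs_prob //= rmorph1.
Qed.

Lemma le_ert_set Z Z' f w n x : Z `<=` Z' -> ert Z' f w n x <= ert Z f w n x.
Proof.
move=> ZZ'; elim: n w x => [|n IH] w x //.
have [sx|nsx] := boolP (stopped Z' x); first by rewrite ert_stopped ?ert_ge0.
have nsZx : ~~ stopped Z x by apply: contra nsx; exact: stoppedW.
rewrite !ertS // lerD2l; apply: ler_sum_mem => z zs.
by apply: ler_wpM2l; [exact: weight_ge0 zs | exact: IH].
Qed.

Lemma ert_shift Z f g h w n x : (forall v, g v = f (h ++ v)) ->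
  ert Z f (h ++ w) n x = ert Z g w n x.
Proof.
move=> gf; elim: n w x => [|n IH] w x //=; case: ifP => // _; congr (1 + _).
have -> : at_state x 1 (h ++ w) = rebase h 1 (at_state x 1 w) by rewrite /rebase /= mul1r.
rewrite (succs_rebase _ _ gf) big_map; apply: eq_bigr => z _.
by rewrite /rebase /= mul1r IH.
Qed.

Lemma ert_sched_agree Z f f' w n x :
  (forall i y, (i < n)%N -> stepn f i (at_state x 1 w) y -> ~~ is_tau (pst y) ->
     f (es_hist y) = f' (es_hist y)) ->
  ert Z f w n x = ert Z f' w n x.
Proof.
elim: n w x => [|n IH] w x ff' //=; case: ifP => // _; congr (1 + _).
rewrite -(succs_sched (f := f)); last exact: ff' 0%N _ isT erefl.
apply: eq_big_seq => z zs; congr (_ * _); apply: IH => i y ilt zy.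
exact: (ff' i.+1 (rebase [::] (es_prob z) y) ilt (stepnS_succs zs zy)).
Qed.

Lemma ert_reach_ge f K x a w y n : 0 <= a -> stepn f K (at_state x a w) y ->
  ratr (es_prob y) * ert set0 f (es_hist y) n (pst y) <= ratr a * ert set0 f w (K + n) x.
Proof.
elim: K x a w => [|K IH] x a w a0 /=; first by move=> <-; rewrite pst_at.
case=> u [/step_succs xu uy].
have xsc : at_state x a w = rebase [::] a (at_state x 1 w) by rewrite /rebase /= mulr1.
move: xu; rewrite xsc (succs_rebase _ _ (fun v => erefl)) => /mapP[z zs uz].
have nsx : ~~ stopped set0 x.
  rewrite /stopped in_set0 /=; apply: contraTN zs => hx.
  by rewrite succs_halted ?pst_at.
have z0 := weight_ge0 zs; rewrite ler0q in z0.
apply: le_trans (IH (pst z) (a * es_prob z) (es_hist z) (mulr_ge0 a0 z0) _) _.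
  by move: uy; rewrite uz /rebase /=; case: z {zs uz z0}.
rewrite (negbTE nsx) rmorphM -mulrA; apply: ler_wpM2l; first by rewrite ler0q.
rewrite -[leLHS]add0r lerD //.
pose g z := ratr (es_prob z) * ert set0 f (es_hist z) (K + n) (pst z).
apply: (ler_sum_elem (F := g) _ zs) => z' z's.
by rewrite /g mulr_ge0 ?ert_ge0 //; exact: weight_ge0 z's.
Qed.

Lemma ert_trunc Z f w d x :
  (forall y, stepn f d (at_state x 1 w) y -> stopped Z (pst y)) ->
  forall n, ert Z f w n x <= ert Z f w d x.
Proof.
elim: d w x => [|d IH] w x dead n.
  by rewrite ert_stopped ?ert_ge0 //; have := dead _ erefl; rewrite pst_at.
case: n => [|n]; first exact: ert_ge0.
have [sx|nsx] := boolP (stopped Z x); first by rewrite !ert_stopped.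
rewrite !ertS // lerD2l; apply: ler_sum_mem => z zs.
apply: ler_wpM2l; first exact: weight_ge0 zs.
by apply: IH => y zy; exact: dead _ (stepnS_succs zs zy).
Qed.

Lemma ert_survive Z f w n x B : 0 <= B -> B + 1 < ert Z f w n x ->
  exists L y, [/\ B < ert Z f w L x, stepn f L (at_state x 1 w) y & ~~ stopped Z (pst y)].
Proof.
move=> B0; elim: n => [|m IH] ertm.
  by move: ertm => /=; lra.
have [[y [xy ys]]|none] :=
  pselect (exists y, stepn f m (at_state x 1 w) y /\ ~~ stopped Z (pst y)).
  by exists m, y; split=> //; rewrite -(ltrD2r 1); exact: lt_le_trans ertm (ertS_le _ _ _ _ _).
apply: IH; apply: lt_le_trans ertm (ert_trunc _ _) => y xy.
by apply: contraT => ys; case: none; exists y.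
Qed.

(** * Expected runtime and PAST *)

Fixpoint frontier (f : scheduler) (k : nat) (y : exstate) : seq exstate :=
  if k is k'.+1 then
    if halted (pst y) then [:: y] else flatten (map (frontier f k') (succs f y))
  else [:: y].

Lemma frontier_halted_self f k y : halted (pst y) -> frontier f k y = [:: y].
Proof. by case: k => //= k ->. Qed.

Lemma frontier_mass f k y :
  \sum_(t <- frontier f k y) ratr (es_prob t) = ratr (es_prob y) :> R.
Proof.
elim: k y => [|k IH] y /=; first by rewrite big_seq1.
case: ifP => hy; first by rewrite big_seq1.
rewrite big_flatten big_map -(sum_succs_prob f (negbT hy)).
by apply: eq_bigr => z _; rewrite IH.
Qed.

Lemma frontier_prob_gt0 f k y t : 0 < es_prob y -> t \in frontier f k y -> 0 < es_prob t.
Proof.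
elim: k y => [|k IH] y /= y0; first by rewrite mem_seq1 => /eqP ->.
case: ifP => _; first by rewrite mem_seq1 => /eqP ->.
by move=> /flatten_mapP[z /(succs_prob_gt0 y0) z0 /(IH _ z0)].
Qed.

Lemma frontier_halted f n k y t : stepn f n y t -> (n <= k)%N -> halted (pst t) ->
  t \in frontier f k y.
Proof.
elim: n k y => [|n IH] [|k] y //=.
- by move=> <-; rewrite mem_seq1.
- by move=> <- _ ->; rewrite mem_seq1.
- move=> [u [/step_succs yu ut]] nk ht.
  have nhy : ~~ halted (pst y) by apply: contraTN yu => hy; rewrite succs_halted.
  by rewrite (negbTE nhy); apply/flatten_mapP; exists u => //; exact: IH.
Qed.

Definition live_mass (f : scheduler) (k : nat) (y : exstate) : R :=
  \sum_(t <- frontier f k y | ~~ halted (pst t)) ratr (es_prob t).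

Lemma live_mass_ge0 f k y : 0 < es_prob y -> 0 <= live_mass f k y.
Proof.
move=> y0; rewrite /live_mass big_seq_cond sumr_ge0 // => t /andP[ty _].
by rewrite ler0q ltW // (frontier_prob_gt0 y0 ty).
Qed.

Lemma live_mass_succ f k y : ~~ halted (pst y) ->
  live_mass f k.+1 y = \sum_(z <- succs f y) live_mass f k z.
Proof. by move=> /negbTE hy; rewrite /live_mass /= hy big_flatten big_map. Qed.

Lemma sum_live_mass f n x a w :
  \sum_(k < n) live_mass f k (at_state x a w) = ratr a * ert set0 f w n x.
Proof.
elim: n x a w => [|n IH] x a w; first by rewrite big_ord0 mulr0.
have [hx|nhx] := boolP (halted x).
  rewrite ert_stopped ?mulr0; last by rewrite /stopped hx orbT.
  apply: big1 => k _; rewrite /live_mass frontier_halted_self ?pst_at //.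
  by rewrite big_cons big_nil pst_at hx.
have xsc : at_state x a w = rebase [::] a (at_state x 1 w) by rewrite /rebase /= mulr1.
have live_succ k : live_mass f k.+1 (at_state x a w) =
    \sum_(z <- succs f (at_state x 1 w))
      live_mass f k (at_state (pst z) (a * es_prob z) (es_hist z)).
  by rewrite live_mass_succ ?pst_at // xsc (succs_rebase _ _ (fun v => erefl)) big_map.
rewrite big_ord_recl ertS ?/stopped ?in_set0 //.
under eq_bigr => k _ do rewrite live_succ.
rewrite exchange_big /= mulrDr mulr1 mulr_sumr; congr (_ + _).
  by rewrite /live_mass /= big_cons big_nil pst_at nhx addr0.
by apply: eq_bigr => z _; rewrite IH rmorphM mulrA.
Qed.

Lemma live_mass_le s f k : live_mass f k (init s) <= 1 - \sum_(t \in T_le s f k) Prob t.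
Proof.
set L := frontier f k (init s).
have L0 t : t \in L -> 0 <= ratr (es_prob t) :> R.
  by move=> /(frontier_prob_gt0 (ltr01 : 0 < es_prob (init s))) t0; rewrite ler0q ltW.
have TL t : T_le s f k t -> t \in L /\ halted (pst t).
  case=> tt [n [/andP[_ nk] st]]; have ht : halted (pst t) by apply/haltedP.
  by split=> //; exact: frontier_halted st nk ht.
have mass1 : \sum_(t <- L) ratr (es_prob t) = 1 :> R by rewrite frontier_mass rmorph1.
have -> : live_mass f k (init s) = 1 - \sum_(t <- L | halted (pst t)) ratr (es_prob t).
  by rewrite /live_mass -/L -mass1 [in RHS](bigID (fun t => halted (pst t))) /=; lra.
rewrite lerD2l lerN2.
(* The frontier may list a state twice, hence the detour through [undup]. *)
set G := fun t : exstate => if t \in T_le s f k then Prob t else 0.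
rewrite (eq_fsbigr G); last by move=> t Tt; rewrite /G Tt.
rewrite (fsbig_widen _ [set` undup L]); last 2 first.
- by move=> t /TL[tL _] /=; rewrite mem_undup.
- by move=> t [_ nTt]; rewrite /G /=; case: ifP => // /set_mem.
rewrite -fsbig_seq ?undup_uniq //; apply: le_trans (ler_sum_undup _ L0).
rewrite [leRHS]big_mkcond; apply: ler_sum_mem => t tL; rewrite /G.
case: ifP => [/set_mem/TL[_ ->]//|_]; case: ifP => // _.
by apply: L0; rewrite -mem_undup.
Qed.

Lemma ert_le_ExpRuntime s f n : ((ert set0 f [::] n s)%:E <= ExpRuntime s f)%E.
Proof.
have term_ge0 k : (0 <= (1 - \sum_(t \in T_le s f k) Prob t)%:E)%E.
  by rewrite lee_fin; apply: le_trans (live_mass_le s f k); exact: live_mass_ge0.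
apply: le_trans (nneseries_lim_ge n (fun k _ _ => term_ge0 k)).
rewrite sumEFin lee_fin big_mkord.
have := sum_live_mass f n s 1 [::]; rewrite rmorph1 mul1r => <-.
by apply: ler_sum => k _; exact: live_mass_le.
Qed.

Lemma PAST_ert_bounded P f : PAST P -> exists B, forall n, ert set0 f [::] n (P, eta0) <= B.
Proof.
move=> /(_ f) fin; exists (fine (ExpRuntime (P, eta0) f)) => n.
rewrite -lee_fin fineK; first exact: ert_le_ExpRuntime.
by rewrite ge0_fin_numE // (ert_le_ExpRuntime _ _ 0).
Qed.

(** * PAST puts every reachable state in the tower *)

Definition ert_bounded (Z : set pstate) (u : pstate) : Prop :=
  exists B, forall f n, ert Z f [::] n u <= B.

Definition bounded_region (Z : set pstate) : set pstate :=
  [set x | forall u, reachable x u -> ert_bounded Z u].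

Local Notation ptower := (tower pterminal bounded_region).
Local Notation ptop := (top pterminal bounded_region).

Definition forward_closed (X : set pstate) : Prop :=
  forall x y, X x -> succ_state x y -> X y.

Lemma reachable_closed X x y : forward_closed X -> X x -> reachable x y -> X y.
Proof. by move=> cX Xx xy; elim: xy Xx => // x' y' z' xy' _ IH /(cX _ _)/(_ xy'). Qed.

Lemma tower_closed X : ptower X -> forward_closed X.
Proof.
elim=> [|Y _ _|F _ IH].
- by move=> [P eta] y; rewrite /pterminal /= => ->.
- by move=> x y Px xy u yu; apply: Px; exact: rt1n_trans xy yu.
- move=> x y [tx|[Y FY Yx]] xy; first by left; move: xy; rewrite /succ_state tx.
  by right; exists Y => //; exact: IH Y FY x y Yx xy.
Qed.

Lemma bounded_region_infl X : ptower X -> X `<=` bounded_region X.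
Proof.
move=> tX x Xx u xu; exists 0 => f n.
by rewrite ert_stopped // /stopped mem_set //; exact: reachable_closed (tower_closed tX) Xx xu.
Qed.

Lemma not_top_unbounded x : ~ ptop x -> exists2 u, reachable x u & ~ ert_bounded ptop u.
Proof.
move=> ntop; apply: contrapT => none; apply/ntop/Phi_top_sub => u xu.
by apply: contrapT => unb; apply: none; exists u.
Qed.

Definition sched_upd (F : scheduler) (w : seq dir) (c : ndir) : scheduler :=
  fun v => if v == w then c else F v.

Lemma succ_state_succs t y F a w : succ_state t y ->
  exists c, exists2 z, z \in succs (sched_upd F w c) (at_state t a w) & pst z = y.
Proof.
rewrite /succ_state /succs /sched_upd /=.
case: transition_of => //= [u|b u|l r|p l r] ty.
- by exists NL, (at_state u a w); rewrite ?mem_seq1 ?pst_at.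
- by exists NL, (at_state u a (rcons w (if b then Lp else Rp))); rewrite ?mem_seq1 ?pst_at.
- case: ty => ->; first by exists NL, (at_state l a (rcons w Ln)); rewrite ?eqxx ?mem_seq1 ?pst_at.
  by exists NR, (at_state r a (rcons w Rn)); rewrite ?eqxx ?mem_seq1 ?pst_at.
- exists NL; case: ty => ->.
    by exists (at_state l (a * p) (rcons w Lp)); rewrite ?mem_seq2 ?eqxx ?pst_at.
  by exists (at_state r (a * (1 - p)) (rcons w Rp)); rewrite ?mem_seq2 ?eqxx ?orbT ?pst_at.
Qed.

Lemma succs_sched_off f f' x z : z \in succs f x ->
  (forall v, ~~ prefix (es_hist z) v -> f' v = f v) -> succs f' x = succs f x.
Proof.
move=> xz ff'; apply: succs_sched => ntau; apply: ff'.
by apply: contraTN (succs_hist_grow xz ntau) => /size_prefix; rewrite leqNgt.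
Qed.

Lemma reachable_run t u F a w : reachable t u -> 0 < a ->
  exists F1 k b w1, [/\ forall v, ~~ prefix w v -> F1 v = F v,
     stepn F1 k (at_state t a w) (at_state u b w1), 0 < b & prefix w w1].
Proof.
move=> tu; elim: tu F a w => [t'|t' y u' ty _ IH] F a w a0.
  by exists F, 0%N, a, w; split=> //; exact: prefix_refl.
have [c [z zs zy]] := succ_state_succs F a w ty.
have z0 := succs_prob_gt0 (x := at_state t' a w) a0 zs.
have [F1 [k [b [w1 [F1F run b0 zw1]]]]] := IH (sched_upd F w c) _ (es_hist z) z0.
exists F1, k.+1, b, w1; split=> //; last exact: prefix_trans (succs_hist zs) zw1.
- move=> v wv; rewrite F1F; last by apply: contra wv; exact: prefix_trans (succs_hist zs).
  by rewrite /sched_upd; case: eqP => // vw; case/negP: wv; rewrite vw prefix_refl.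
- exists z; split; first by apply/step_succs; rewrite (succs_sched_off zs F1F).
  by move: run; rewrite -zy; case: z {zs zy F1F zw1 z0}.
Qed.

Record phase := Phase { ph_sched : scheduler; ph_steps : nat; ph_state : exstate }.

Definition escaping (s0 : pstate) (r : phase) : Prop :=
  [/\ stepn (ph_sched r) (ph_steps r) (init s0) (ph_state r),
      ~ ptop (pst (ph_state r)) & 0 < es_prob (ph_state r)].

Definition next_phase (s0 : pstate) (j : nat) (r r' : phase) : Prop :=
  [/\ forall v, ~~ prefix (es_hist (ph_state r)) v -> ph_sched r' v = ph_sched r v,
      prefix (es_hist (ph_state r)) (es_hist (ph_state r'))
    & j%:R <= ert set0 (ph_sched r') [::] (ph_steps r') s0].

Lemma escape_to_unbounded s0 r : escaping s0 r ->
  exists F1 K u b w1,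
    [/\ forall v, ~~ prefix (es_hist (ph_state r)) v -> F1 v = ph_sched r v,
        stepn F1 K (init s0) (at_state u b w1), 0 < b, prefix (es_hist (ph_state r)) w1
      & ~ ert_bounded ptop u].
Proof.
case: r => F tau x [/= run xtop x0]; have [u xu unb] := not_top_unbounded xtop.
have [F1 [k [b [w1 [F1F run1 b0 xw1]]]]] := reachable_run F (es_hist x) xu x0.
exists F1, (tau + k)%N, u, b, w1; split=> //.
apply/stepn_add; exists x; split; last by move: run1; case: x {run xtop x0 xu F1F xw1}.
by apply: stepn_sched_agree run => v /F1F ->.
Qed.

Lemma unbounded_splice s0 F K u b w1 j : stepn F K (init s0) (at_state u b w1) -> 0 < b ->
  ~ ert_bounded ptop u -> exists f L y,
  [/\ stepn (splice F w1 f) (K + L) (init s0) (rebase w1 b y), ~ ptop (pst y), 0 < es_prob y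
    & j%:R <= ert set0 (splice F w1 f) [::] (K + L) s0].
Proof.
move=> run b0 unb; have rb0 : 0 < ratr b :> R by rewrite ltr0q.
(* [u] is reached with probability [b], so expected runtime [j / b] from [u]
   contributes [j]. *)
pose B : R := j%:R / ratr b; have B0 : 0 <= B by rewrite divr_ge0 // ltW.
have [f [n big]] : exists f n, B + 1 < ert ptop f [::] n u.
  apply: contrapT => none; apply: unb; exists (B + 1) => f n.
  by rewrite leNgt; apply/negP => lt; apply: none; exists f, n.
have [L [y [bigL uy ys]]] := ert_survive B0 big.
exists f, L, y; split.
- exact: splice_run run uy.
- by move: ys; rewrite /stopped negb_or => /andP[/negP ny _] ty; apply: ny; rewrite mem_set.
- exact: stepn_prob_gt0 uy.
have := ert_reach_ge L ler01 (stepn_sched_agree (fun v nv => esym (splice_out F f nv)) run).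
rewrite rmorph1 mul1r; apply: le_trans.
rewrite pst_at -[X in ert _ _ X](cats0 w1).
rewrite (ert_shift _ _ _ _ (fun v => esym (splice_cat F w1 f v))).
have -> : j%:R = ratr b * B by rewrite /B mulrC divfK ?gt_eqF.
apply: ler_wpM2l; first exact: ltW.
by apply: le_trans (ltW bigL) _; apply: le_ert_set.
Qed.

Lemma escape_phase s0 j r : escaping s0 r -> exists2 r', escaping s0 r' & next_phase s0 j r r'.
Proof.
move=> /escape_to_unbounded[F1 [K [u [b [w1 [F1F run b0 xw1 unb]]]]]].
have [f [L [y [run' ytop y0 big]]]] := unbounded_splice j run b0 unb.
exists (Phase (splice F1 w1 f) (K + L) (rebase w1 b y)); first by split=> //=; rewrite mulr_gt0.
split=> //=; last exact: prefix_trans xw1 (prefix_prefix _ _).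
by move=> v xv; rewrite splice_out ?F1F //; apply: contra xv; exact: prefix_trans xw1.
Qed.

Lemma PAST_reach_top P s : PAST P -> Reach (P, eta0) s -> ptop s.
Proof.
move=> past [f0 [a0 [w0 [n0 [_ run0]]]]]; apply: contrapT => ntop.
set s0 := (P, eta0).
have esc0 : escaping s0 (Phase f0 n0 (ES s.1 s.2 a0 w0)).
  by split=> //=; [case: s ntop {run0} | exact: stepn_prob_gt0 run0].
have [r rP] := dependent_choice esc0 (@escape_phase s0).
have [G GF] : exists G : scheduler,
    forall j v, ~ prefix (es_hist (ph_state (r j))) v -> G v = ph_sched (r j) v.
  apply: stabilizing_limit => [j v /=|j v /negP nv]; last by have [_ [->]] := rP j.
  by have [_ [_ w_j _]] := rP j; exact: prefix_trans.
have big j : j%:R <= ert set0 G [::] (ph_steps (r j.+1)) s0.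
  have [[run _ _] _] := rP j.+1; have [_ [_ _ bound]] := rP j.
  suff <- : ert set0 (ph_sched (r j.+1)) [::] (ph_steps (r j.+1)) s0 =
            ert set0 G [::] (ph_steps (r j.+1)) s0 by [].
  (* Before that step no branching state carries a history extending the one
     of [ph_state (r j.+1)], and off those histories [G] is [ph_sched (r j.+1)]. *)
  apply: ert_sched_agree => i y ilt iy ntau; apply/esym/GF => wy.
  by case/negP: ntau; exact: stepn_later_hist iy run ilt wy.
have [B GB] := PAST_ert_bounded G past.
have := le_trans (big (Num.truncn B).+1) (GB _).
by rewrite leNgt truncnS_gt.
Qed.

(** * The RSM-maps *)

Local Notation prank := (rank pterminal bounded_region).
Local Notation plt := (@stage_lt _ pterminal bounded_region).

Definition ert_values (Z : set pstate) (t : pstate) : set R :=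
  [set r | exists f n, r = ert Z f [::] n t].

Definition ert_sup (Z : set pstate) (t : pstate) : R := sup (ert_values Z t).

Lemma ert_values_n0 Z t : ert_values Z t !=set0.
Proof. by exists 0, (fun _ => NL), 0%N. Qed.

Lemma ert_le_sup Z t f n : ert_bounded Z t -> ert Z f [::] n t <= ert_sup Z t.
Proof.
case=> B tB; apply: sup_upper_bound; last by exists f, n.
by split; [exact: ert_values_n0 | exists B => _ [g [m ->]]].
Qed.

Lemma ert_sup_le Z t a c M : 0 < a ->
  (forall f n, a * ert Z f [::] n t + c <= M) -> a * ert_sup Z t + c <= M.
Proof. by move=> a0 tM; apply: sup_affine_le (ert_values_n0 Z t) a0 _ => _ [f [n ->]]. Qed.

Lemma ert_sup_eq0 Z t : Z t -> ert_sup Z t = 0.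
Proof.
move=> Zt; have t0 f n : ert Z f [::] n t = 0 by rewrite ert_stopped // /stopped mem_set.
apply/eqP; rewrite eq_le; apply/andP; split.
  rewrite -[ert_sup _ _]mul1r -[leLHS]addr0.
  by apply: ert_sup_le => // f n; rewrite t0 mulr0 addr0.
by rewrite -(t0 (fun _ => NL) 0%N) ert_le_sup //; exists 0 => f n; rewrite t0.
Qed.

Lemma ert_sup_ge1 Z t : ert_bounded Z t -> ~~ stopped Z t -> 1 <= ert_sup Z t.
Proof.
move=> bt st; apply: le_trans (ert_le_sup (fun _ => NL) 1 bt).
rewrite ertS // lerDl big_seq sumr_ge0 // => z zs.
by rewrite mulr_ge0 ?ert_ge0 //; exact: weight_ge0 zs.
Qed.

Lemma ert_sup_tau Z t t' : ert_bounded Z t -> ~~ stopped Z t ->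
  transition_of t.1 t.2 = Tau t' -> ert_sup Z t' + 1 <= ert_sup Z t.
Proof.
move=> bt st tt'; rewrite -[ert_sup Z t']mul1r; apply: ert_sup_le => // f n.
rewrite mul1r addrC; apply: le_trans (ert_le_sup f n.+1 bt).
by rewrite ertS // /succs /= tt' big_seq1 /= rmorph1 mul1r pst_at.
Qed.

Lemma ert_sup_branch Z t l r : ert_bounded Z t -> ~~ stopped Z t ->
  transition_of t.1 t.2 = Branch l r -> Num.max (ert_sup Z l) (ert_sup Z r) + 1 <= ert_sup Z t.
Proof.
move=> bt st tlr.
have branch (c : ndir) : ert_sup Z (if c is NL then l else r) + 1 <= ert_sup Z t.
  rewrite -[ert_sup Z _]mul1r; apply: ert_sup_le => // f n.
  pose F : scheduler := fun v => if v is _ :: v' then f v' else c.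
  have Fc : F [::] = c by [].
  have Fcons d v : F (d :: v) = f v by [].
  clearbody F; rewrite mul1r addrC; apply: le_trans (ert_le_sup F n.+1 bt).
  rewrite ertS // /succs /= tlr Fc; case: c {Fc}; rewrite big_seq1 /= rmorph1 mul1r pst_at.
  - by rewrite -(ert_shift (h := [:: Ln]) _ [::] n l (fun v => esym (Fcons Ln v))).
  - by rewrite -(ert_shift (h := [:: Rn]) _ [::] n r (fun v => esym (Fcons Rn v))).
by rewrite maxEle; case: ifP => _; [exact: (branch NR) | exact: (branch NL)].
Qed.

Lemma ert_sup_coin Z t p l r : ert_bounded Z t -> ~~ stopped Z t ->
  transition_of t.1 t.2 = Coin p l r ->
  ratr p * ert_sup Z l + (1 - ratr p) * ert_sup Z r + 1 <= ert_sup Z t.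
Proof.
move=> bt st tc; have /andP[p0 p1] := transition_of_Coin tc.
have rp0 : 0 < ratr p :> R by rewrite ltr0q.
have rp1 : 0 < 1 - ratr p :> R by rewrite subr_gt0 -(rmorph1 (@ratr R)) ltr_rat.
have key f1 n1 f2 n2 :
    ratr p * ert Z f1 [::] n1 l + (1 - ratr p) * ert Z f2 [::] n2 r + 1 <= ert_sup Z t.
  (* The two branches have histories starting with [Lp] and [Rp], so a single
     scheduler can follow [f1] on one and [f2] on the other. *)
  pose F : scheduler :=
    fun v => match v with Lp :: v' => f1 v' | Rp :: v' => f2 v' | _ => NL end.
  apply: le_trans (ert_le_sup F (maxn n1 n2).+1 bt).
  rewrite ertS // /succs /= tc big_cons big_seq1 /= !mul1r rmorphB rmorph1 !pst_at addrC.
  rewrite (@ert_shift Z F f1 [:: Lp] [::] _ l (fun v => erefl)).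
  rewrite (@ert_shift Z F f2 [:: Rp] [::] _ r (fun v => erefl)).
  rewrite lerD2l; apply: lerD; apply: ler_wpM2l; try exact: ltW.
  - exact: ert_homo (leq_maxl n1 n2).
  - exact: ert_homo (leq_maxr n1 n2).
rewrite -addrA; apply: ert_sup_le => // f1 n1.
rewrite addrCA; apply: ert_sup_le => // f2 n2.
by rewrite addrCA addrA; exact: key.
Qed.

Lemma at_state_inj u u' a a' w w' :
  at_state u a w = at_state u' a' w' -> [/\ u = u', a = a' & w = w'].
Proof. by case: u u' => P eta [P' eta'] [-> -> -> ->]. Qed.

Lemma tau_of_step t s' : (forall f, step f (init t) (at_state s' 1 [::])) ->
  transition_of t.1 t.2 = Tau s'.
Proof.
move=> /(_ (fun _ => NL))/step_succs; rewrite /succs /=.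
case: transition_of => [|u|b u|l r|p l r] //=; rewrite ?mem_seq1 ?mem_seq2.
- by move=> /eqP/at_state_inj[->].
- by case: b => /eqP/at_state_inj[].
- by move=> /eqP/at_state_inj[].
- by case/orP=> /eqP/at_state_inj[].
Qed.

Lemma branch_of_step t sl sr :
  (forall f, step f (init t) (at_state sl 1 [:: Ln]) \/ step f (init t) (at_state sr 1 [:: Rn])) ->
  transition_of t.1 t.2 = Branch sl sr.
Proof.
move=> H; move: (H (fun _ => NL)) (H (fun _ => NR)); rewrite !step_succs /succs /=.
case: transition_of => [|u|b u|l r|p l r] /=; rewrite ?mem_seq1 ?mem_seq2.
- by case.
- by case=> /eqP/at_state_inj[].
- by case: b; case=> /eqP/at_state_inj[].
- case=> [/eqP/at_state_inj[-> _ _]|/eqP/at_state_inj[_ _ //]].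
  by case=> [/eqP/at_state_inj[_ _ //]|/eqP/at_state_inj[-> _ _]].
- by case=> /orP[] /eqP/at_state_inj[].
Qed.

Lemma coin_of_step t p sl sr :
  (forall f, step f (init t) (at_state sl p [:: Lp]) /\
             step f (init t) (at_state sr (1 - p) [:: Rp])) ->
  transition_of t.1 t.2 = Coin p sl sr.
Proof.
move=> /(_ (fun _ => NL))[]; rewrite !step_succs /succs /=.
case: transition_of => [|u|b u|l r|q l r] //=; rewrite ?mem_seq1 ?mem_seq2.
- by move=> /eqP/at_state_inj[].
- by case: b => [_|] /eqP/at_state_inj[_ _ //].
- by move=> /eqP/at_state_inj[].
- case/orP=> [/eqP/at_state_inj[-> -> _]|/eqP/at_state_inj[_ _ //]].
  by case/orP=> [/eqP/at_state_inj[_ _ //]|/eqP/at_state_inj[-> _ _]]; rewrite mul1r.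
Qed.

Lemma Reach_succ_state s t u : Reach s t -> succ_state t u -> Reach s u.
Proof.
by move=> st /(succ_state_succs (fun _ => NL) 1 [::])[c [z tz <-]]; exact: Reach_succs st tz.
Qed.

Definition below (s : pstate) : set pstate := [set u | plt (prank u) (prank s)].

Definition cert (s t : pstate) : R :=
  if pselect (Reach s t /\ ~ below s t) then ert_sup (below s) t else 0.

Section Certificate.
Variable s : pstate.
Hypotheses (top_s : ptop s) (live_s : ~ pterminal s).

Lemma bounded_below t : Reach s t -> ert_bounded (below s) t.
Proof.
move=> /Reach_reachable st.
have [Y [tY PYs Ybelow]] := rank_below bounded_region_infl top_s live_s.
have [B YB] := PYs t st; exists B => f n.
exact: le_trans (le_ert_set _ _ _ _ Ybelow) (YB f n).
Qed.

Lemma terminal_below t : Reach s t -> pterminal t -> below s t.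
Proof.
move=> /Reach_reachable st tt.
have top_t : ptop t := reachable_closed (tower_closed (tower_top _ _)) top_s st.
exact: (rank_base_lt bounded_region_infl top_s live_s top_t tt).
Qed.

Lemma live_not_below t : Reach s t -> ~ below s t -> ~~ stopped (below s) t.
Proof.
move=> st nb; rewrite /stopped negb_or; apply/andP; split; first by apply/negP => /set_mem.
by apply/negP => /haltedP; apply: contra_not nb; exact: terminal_below.
Qed.

Lemma cert_Reach t : Reach s t -> cert s t = ert_sup (below s) t.
Proof.
move=> st; rewrite /cert; case: pselect => // nstb.
have bt : below s t by apply: contrapT => nb; exact: nstb.
by rewrite ert_sup_eq0.
Qed.

Lemma cert_gt0 t : 0 < cert s t -> Reach s t /\ ~ below s t.
Proof. by rewrite /cert; case: pselect => /= [//|_]; rewrite ltxx. Qed.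

Lemma cert_RSM : RSM_map (cert s) 1.
Proof.
split=> [t|//|t tt|t /cert_gt0[st nb]].
- rewrite /cert; case: pselect => /= [[st nb]|_] //; apply: le_trans ler01 (ert_sup_ge1 _ _).
    exact: bounded_below.
  exact: live_not_below.
- by rewrite /cert; case: pselect => /= [[st []]|//]; exact: terminal_below.
have [bt lt] := (bounded_below st, live_not_below st nb).
have reach u : succ_state t u -> Reach s u by exact: Reach_succ_state.
split.
- move=> s' /tau_of_step ts'; have st' : Reach s s' by apply: reach; rewrite /succ_state ts'.
  by rewrite !cert_Reach //; exact: ert_sup_tau.
- move=> sl sr /branch_of_step tlr.
  have [stl str] : Reach s sl /\ Reach s sr.
    by split; apply: reach; rewrite /succ_state tlr; [left|right].
  by rewrite !cert_Reach //; exact: ert_sup_branch.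
- move=> p sl sr /coin_of_step tc.
  have [stl str] : Reach s sl /\ Reach s sr.
    by split; apply: reach; rewrite /succ_state tc; [left|right].
  by rewrite !cert_Reach //; exact: ert_sup_coin.
Qed.

Lemma cert_eq0 t : cert s t = 0 <-> (Reach s t /\ below s t) \/ ~ Reach s t.
Proof.
rewrite /cert; case: pselect => /= [[st nb]|nstb].
  split=> [e|[[_ //]|//]].
  by have := ert_sup_ge1 (bounded_below st) (live_not_below st nb); rewrite e ler10.
split=> // _; have [st|nst] := pselect (Reach s t); last by right.
by left; split=> //; apply: contrapT => nb; apply: nstb.
Qed.

End Certificate.

Theorem theorem5p12 (P : prog) :
  PAST P ->
  exists (O : Type) (lt : O -> O -> Prop),
    well_order lt /\
    exists (g : pstate -> O) (k : pstate -> ((pstate -> R) * R)%type),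
      (forall s, Reach (P, eta0) s -> (is_zero lt (g s) <-> pterminal s)) /\
      (forall s, Reach (P, eta0) s -> ~ pterminal s ->
         RSM_map (k s).1 (k s).2 /\
         (forall t : pstate,
            (k s).1 t = 0 <->
            ((Reach s t /\ lt (g t) (g s)) \/ ~ Reach s t))).
Proof.
move=> past; exists (stage pterminal bounded_region), plt.
split; first exact: stage_lt_well_order bounded_region_infl.
exists prank, (fun s => (cert s, 1)); split=> [s sR|s sR nts].
  exact (rank_zero bounded_region_infl (PAST_reach_top past sR)).
have top_s := PAST_reach_top past sR.
by split; [exact: cert_RSM | move=> t; exact: cert_eq0].
Qed.
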